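(* Let $Q$ be an acyclic quiver and $W=0$ (so $\mathcal{A}=\mathrm{rep}(Q)$). Then $(Q,W)$ is genteel: the only self-stable objects of $\mathcal{A}$ are the simple representations $S_i$, $i\in V(Q)$.
   Context: $Q$ is a quiver with finite vertex set $V(Q)$; acyclic means it has no oriented cycles. $\mathcal{A}$ is the category of finite-dimensional representations of $Q$, $S_i$ the one-dimensional simple representation at vertex $i$. $N=\mathbb{Z}^{V(Q)}$ with basis $(e_i)$, $[E]\in N$ the dimension vector. The skew form $\langle-,-\rangle$ on $N$ is $\langle e_i,e_j\rangle=a_{ji}-a_{ij}$, where $a_{ij}$ is the number of arrows from $i$ to $j$; write $\langle A,B\rangle=\langle[A],[B]\rangle$. For $\theta\in\mathrm{Hom}(N,\mathbb{R})$, a nonzero object $E$ is $\theta$-stable if $\theta(E)=0$ and every proper nonzero subobject $A\subset E$ satisfies $\theta(A)<0$. An object $E$ is self-stable if it is $\theta$-stable for $\theta=\langle-,[E]\rangle$ (equivalently, $E\neq0$ and every non-trivial short exact sequence $0\to A\to E\to B\to0$ has $\langle A,B\rangle<0$). A quiver with potential is genteel if the only self-stable objects are of the form $S_i$. *)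

From HB Require Import structures.
From mathcomp Require Import all_boot all_order all_algebra.
Set Implicit Arguments. Unset Strict Implicit. Unset Printing Implicit Defensive.
Import Order.TTheory GRing.Theory Num.Theory.
Local Open Scope ring_scope.

Record quiver := Quiver {
  qV : finType;
  qA : finType;
  qsrc : qA -> qV;
  qtgt : qA -> qV }.

Definition is_oriented_cycle (Q : quiver) (p : seq (qA Q)) : bool :=
  match p with
  | [::] => false
  | a :: p' => path (fun x y => qtgt x == qsrc y) a p'
               && (qtgt (last a p') == qsrc a)
  end.

Definition acyclic (Q : quiver) : Prop :=
  forall p : seq (qA Q), ~~ is_oriented_cycle p.

Definition narrows (Q : quiver) (i j : qV Q) : nat :=
  #|[set a : qA Q | (qsrc a == i) && (qtgt a == j)]|.

Definition skew (Q : quiver) (x y : qV Q -> int) : int :=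
  \sum_(i : qV Q) \sum_(j : qV Q)
     x i * y j * ((narrows j i)%:Z - (narrows i j)%:Z).

(* finite-dimensional representations (row-vector convention:
   the map of arrow a acts by v |-> v *m rmap a) *)
Record rep (K : fieldType) (Q : quiver) := Rep {
  rdim : qV Q -> nat;
  rmap : forall a : qA Q, 'M[K]_(rdim (qsrc a), rdim (qtgt a)) }.

Definition dimvec (K : fieldType) (Q : quiver) (E : rep K Q) : qV Q -> int :=
  fun i => (rdim E i)%:Z.

Definition is_subrep (K : fieldType) (Q : quiver) (E : rep K Q)
  (U : forall i : qV Q, 'M[K]_(rdim E i)) : Prop :=
  forall a : qA Q, (U (qsrc a) *m rmap E a <= U (qtgt a))%MS.

Definition subdimvec (K : fieldType) (Q : quiver) (E : rep K Q)
  (U : forall i : qV Q, 'M[K]_(rdim E i)) : qV Q -> int :=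
  fun i => (\rank (U i))%:Z.

Definition rep_nonzero (K : fieldType) (Q : quiver) (E : rep K Q) : Prop :=
  exists i, (0 < rdim E i)%N.

Definition sub_nonzero (K : fieldType) (Q : quiver) (E : rep K Q)
  (U : forall i : qV Q, 'M[K]_(rdim E i)) : Prop :=
  exists i, (0 < \rank (U i))%N.

Definition sub_proper (K : fieldType) (Q : quiver) (E : rep K Q)
  (U : forall i : qV Q, 'M[K]_(rdim E i)) : Prop :=
  exists i, (\rank (U i) < rdim E i)%N.

Definition eval_theta (Q : quiver) (theta : qV Q -> int) (x : qV Q -> int) : int :=
  \sum_(i : qV Q) theta i * x i.

Definition theta_stable (K : fieldType) (Q : quiver) (theta : qV Q -> int)
  (E : rep K Q) : Prop :=
  [/\ rep_nonzero E,
      eval_theta theta (dimvec E) = 0 &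
      forall U : (forall i : qV Q, 'M[K]_(rdim E i)), is_subrep U -> sub_nonzero U -> sub_proper U ->
        eval_theta theta (subdimvec U) < 0].

(* self-stable: theta-stable for theta = < - , [E] > *)
Definition self_stable (K : fieldType) (Q : quiver) (E : rep K Q) : Prop :=
  theta_stable (fun i : qV Q =>
                  skew (fun j : qV Q => (i == j)%:Z) (dimvec E)) E.

Definition simple_rep (K : fieldType) (Q : quiver) (i : qV Q) : rep K Q :=
  @Rep K Q (fun j => nat_of_bool (j == i)) (fun a => 0).

Definition rep_iso (K : fieldType) (Q : quiver) (E F : rep K Q) : Prop :=
  exists f : forall i : qV Q, 'M[K]_(rdim E i, rdim F i),
    (forall i, row_free (f i) && row_full (f i)) /\
    (forall a : qA Q, rmap E a *m f (qtgt a) = f (qsrc a) *m rmap F a).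

Definition genteel (K : fieldType) (Q : quiver) : Prop :=
  forall E : rep K Q, self_stable E -> exists i : qV Q, rep_iso E (simple_rep K i).

From Pilot Require Import Defs.
From mathcomp Require Import all_boot all_order all_algebra.
Set Implicit Arguments. Unset Strict Implicit. Unset Printing Implicit Defensive.
Import Order.TTheory GRing.Theory Num.Theory.
Local Open Scope ring_scope.

(* Since Q is acyclic, the support of a nonzero self-stable E contains a
   vertex i from which no arrow lands in the support.  Then
   theta(e_i) = <e_i, [E]> >= 0 and every subspace of E_i is a
   subrepresentation U with theta(U) = theta(e_i) dim U >= 0; stability forbids
   any proper one, so E is one-dimensional and concentrated at i, i.e.
   E = S_i (all arrow maps vanish as Q has no loops). *)

Section Walks.

Variable Q : quiver.

Definition composable (a b : qA Q) : bool := qtgt a == qsrc b.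

Lemma composable_walk_path (f : nat -> qA Q) :
    (forall k, composable (f k) (f k.+1)) -> forall n x,
  path composable (f x) (map f (iota x.+1 n))
  && (last (f x) (map f (iota x.+1 n)) == f (x + n)%N).
Proof.
move=> hf; elim=> [|n IHn] x /=; first by rewrite addn0 eqxx.
by rewrite hf addnS -addSn; exact: IHn.
Qed.

Lemma walk_oriented_cycle (f : nat -> qA Q) i j :
    (forall k, composable (f k) (f k.+1)) ->
    (i < j)%N -> qsrc (f i) = qsrc (f j) ->
  is_oriented_cycle (f i :: map f (iota i.+1 (j - i.+1))).
Proof.
move=> hf lt_ij eq_src; rewrite /is_oriented_cycle.
case/andP: (composable_walk_path hf (j - i.+1) i) => -> /eqP ->.
have end_j : ((i + (j - i.+1)).+1 = j)%N by rewrite -addSn subnKC.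
have := hf (i + (j - i.+1))%N; rewrite /composable => /eqP ->.
by rewrite end_j eq_src eqxx.
Qed.

Hypothesis hQ : acyclic Q.

Lemma acyclic_no_loop (a : qA Q) : qtgt a != qsrc a.
Proof. exact: hQ [:: a]. Qed.

Lemma acyclic_no_infinite_walk (f : nat -> qA Q) :
  ~ (forall k, composable (f k) (f k.+1)).
Proof.
move=> hf; pose v (k : 'I_#|qV Q|.+1) := qsrc (f k).
case: (boolP (injectiveb v)) => [/injectiveP inj_v|/injectivePn[i [j neq_ij eq_v]]].
  by have := leq_card _ inj_v; rewrite card_ord ltnn.
have [lt_ij|lt_ji|eq_ij] := ltngtP i j.
- exact/negP/(walk_oriented_cycle hf lt_ij eq_v)/hQ.
- exact/negP/(walk_oriented_cycle hf lt_ji (esym eq_v))/hQ.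
- by move: neq_ij; rewrite (val_inj eq_ij) eqxx.
Qed.

Lemma acyclic_exists_sink (S : pred (qV Q)) v0 : v0 \in S ->
  exists2 v, v \in S & forall a, qsrc a = v -> qtgt a \notin S.
Proof.
move=> Sv0.
case: (boolP [exists v in S, [forall a, (qsrc a == v) ==> (qtgt a \notin S)]]).
  case/exists_inP=> v Sv /forallP sink_v; exists v => // a src_a.
  by have := sink_v a; rewrite src_a eqxx.
rewrite negb_exists_in => /forall_inP no_sink; exfalso.
have out_arrow v : v \in S -> exists a, (qsrc a == v) && (qtgt a \in S).
  by move=> Sv; have /forallPn[a] := no_sink v Sv; rewrite negb_imply negbK; exists a.
have [a0 _] := out_arrow v0 Sv0.
pose out v := odflt a0 [pick a | (qsrc a == v) && (qtgt a \in S)].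
have outP v : v \in S -> (qsrc (out v) == v) && (qtgt (out v) \in S).
  move=> Sv; rewrite /out; case: pickP => //= none.
  by have [a] := out_arrow v Sv; rewrite none.
pose w k := iter k (fun v => qtgt (out v)) v0.
have w_in k : w k \in S.
  by elim: k => // k IHk; case/andP: (outP _ IHk).
apply: (@acyclic_no_infinite_walk (out \o w)) => k.
by case/andP: (outP _ (w_in k.+1)) => /eqP; rewrite /composable /= => ->.
Qed.

End Walks.

Lemma skew_unit_ge0 (Q : quiver) (i : qV Q) (x : qV Q -> int) :
    (forall j, 0 <= x j) -> (forall a, qsrc a = i -> x (qtgt a) = 0) ->
  0 <= Defs.skew (fun j => (i == j)%:Z) x.
Proof.
move=> x_ge0 x_out; apply: sumr_ge0 => k _; apply: sumr_ge0 => j _.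
have [<-|_] := eqVneq i k; last by rewrite !mul0r.
rewrite mul1r; have [->|] := posnP (narrows i j); first by rewrite subr0 mulr_ge0.
rewrite card_gt0 => /set0Pn[a]; rewrite inE => /andP[/eqP src_a /eqP tgt_a].
by rewrite -tgt_a x_out // mul0r.
Qed.

Section SupportedFamilies.

Variables (K : fieldType) (Q : quiver) (E : rep K Q) (i : qV Q).
Variable U : forall j : qV Q, 'M[K]_(rdim E j).
Hypothesis U_supp : forall j, j != i -> U j = 0.

Lemma supported_subrep :
  (forall a, qsrc a = i -> rdim E (qtgt a) = 0%N) -> is_subrep U.
Proof.
move=> out_i a; have [src_a|src_a] := eqVneq (qsrc a) i.
  apply: submx_full; rewrite /row_full eqn_leq rank_leq_col /=.
  exact: leq_trans (eq_leq (out_i a src_a)) (leq0n _).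
by rewrite U_supp // mul0mx sub0mx.
Qed.

Lemma eval_theta_supported (theta : qV Q -> int) :
  eval_theta theta (subdimvec U) = theta i * (\rank (U i))%:Z.
Proof.
rewrite /eval_theta (bigD1 i) //= big1 ?addr0 // => j /U_supp U_j.
by rewrite /subdimvec U_j mxrank0 mulr0.
Qed.

End SupportedFamilies.

Definition pid_at (K : fieldType) (Q : quiver) (E : rep K Q) (i : qV Q) (r : nat) :
    forall j : qV Q, 'M[K]_(rdim E j) :=
  fun j => if j == i then pid_mx r else 0.

Lemma theta_stable_at_sink (K : fieldType) (Q : quiver) (theta : qV Q -> int)
    (E : rep K Q) (i : qV Q) :
    theta_stable theta E -> 0 <= theta i ->
    (forall a, qsrc a = i -> rdim E (qtgt a) = 0%N) -> (0 < rdim E i)%N ->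
  forall j, rdim E j = (j == i) :> nat.
Proof.
move=> [_ _ stab] theta_i_ge0 out_i Ei j.
have pid_at_supp r k : k != i -> pid_at E i r k = 0 by rewrite /pid_at => /negbTE->.
have not_proper r : (0 < r <= rdim E i)%N -> ~ sub_proper (pid_at E i r).
  case/andP=> r_gt0 r_le proper.
  have := stab _ (supported_subrep (pid_at_supp r) out_i).
  rewrite (eval_theta_supported (pid_at_supp r)) ltNge mulr_ge0 //.
  suff nonzero : sub_nonzero (pid_at E i r) by move/(_ nonzero proper).
  by exists i; rewrite /pid_at eqxx rank_pid_mx.
(* A line in E_i is proper unless dim E_i = 1; all of E_i, unless E lives at i. *)
have [->|j_neq_i] := eqVneq j i.
  apply/eqP; rewrite eqn_leq Ei andbT leqNgt; apply/negP=> Ei_gt1.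
  apply: (not_proper 1%N); first by rewrite Ei.
  by exists i; rewrite /pid_at eqxx rank_pid_mx // ltnW.
apply/eqP; rewrite eqn0Ngt; apply/negP=> Ej.
apply: (not_proper (rdim E i)); first by rewrite Ei leqnn.
by exists j; rewrite pid_at_supp // mxrank0.
Qed.

Lemma rep_iso_simple (K : fieldType) (Q : quiver) (E : rep K Q) (i : qV Q) :
    (forall a : qA Q, qtgt a != qsrc a) -> (forall j, rdim E j = (j == i) :> nat) ->
  rep_iso E (simple_rep K i).
Proof.
move=> no_loop dimE; exists (fun j => pid_mx (rdim E j)); split.
  by move=> j; rewrite /row_free /row_full /= rank_pid_mx ?dimE // eqxx.
move=> a /=; rewrite mulmx0; apply/matrixP=> r c; exfalso.
have [src_a|/negbTE src_a] := eqVneq (qsrc a) i.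
  by case: c; rewrite /= -src_a (negbTE (no_loop a)).
by case: r; rewrite dimE src_a.
Qed.

Theorem mainTheorem14 (K : fieldType) (Q : quiver) (hQ : acyclic Q) :
  genteel K Q.
Proof.
move=> E stab; have [[v0 Ev0] _ _] := stab.
have [i Ei sink_i] := @acyclic_exists_sink Q hQ [pred v | 0 < rdim E v]%N v0 Ev0.
have out_i a : qsrc a = i -> rdim E (qtgt a) = 0%N.
  by move/sink_i; rewrite inE /= -eqn0Ngt => /eqP.
have theta_i_ge0 : 0 <= Defs.skew (fun j => (i == j)%:Z) (dimvec E).
  by apply: skew_unit_ge0 => [j|a /out_i]; rewrite /dimvec // => ->.
exists i; apply: rep_iso_simple (acyclic_no_loop hQ) _.
exact: theta_stable_at_sink stab theta_i_ge0 out_i Ei.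
Qed.
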